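(* Let $T$ be a tournament, let $v$ be a vertex with $d^-(v)=0$, and let $M\subseteq V(T)$. Then $T$ is $M$-sparse if and only if $T-v$ is $(M\setminus\{v\})$-sparse.
   Context: A tournament is a digraph with exactly one arc between each pair of distinct vertices; $d^-(v)$ is the in-degree of $v$ and $T-v$ is the subtournament induced by $V(T)\setminus\{v\}$. For an ordering $\sigma$ of the vertices, an arc $(x,y)$ is backward if $y$ precedes $x$, and $d_\sigma(u)$ is the number of backward arcs incident to $u$. For a tournament $S$ and $N\subseteq V(S)$, $S$ is $N$-sparse if there is an ordering $\sigma$ of $V(S)$ with $d_\sigma(u)\le1$ for all $u$ and $d_\sigma(u)=0$ for all $u\in N$. *)

From mathcomp Require Import all_boot.
Set Implicit Arguments. Unset Strict Implicit. Unset Printing Implicit Defensive.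

Definition is_tournament (V : finType) (arc : rel V) : Prop :=
  (forall x, ~~ arc x x) /\ (forall x y, x != y -> arc x y != arc y x).

Definition indeg (V : finType) (arc : rel V) (v : V) : nat :=
  #|[set u | arc u v]|.

Definition is_ordering (V : finType) (S : {set V}) (s : seq V) : Prop :=
  uniq s /\ s =i S.

Definition backward (V : finType) (arc : rel V) (s : seq V) (x y : V) : bool :=
  arc x y && (index y s < index x s).

Definition dsig (V : finType) (arc : rel V) (s : seq V) (u : V) : nat :=
  count (fun w => backward arc s u w || backward arc s w u) s.

Definition sparse (V : finType) (arc : rel V) (S N : {set V}) : Prop :=
  exists s : seq V, is_ordering S s /\
    (forall u, u \in S -> dsig arc s u <= 1) /\
    (forall u, u \in S -> u \in N -> dsig arc s u = 0).

From mathcomp Require Import all_boot zify.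

Set Implicit Arguments.
Unset Strict Implicit.
Unset Printing Implicit Defensive.

(* Deleting a vertex from an ordering keeps the relative order of the other
   vertices, so it can only remove backward arcs.  Conversely, a vertex of
   in-degree 0 put in front of an ordering is incident to no backward arc and
   changes nothing for the other vertices.  Neither direction uses that the
   relation is a tournament. *)

Section Ordering.
Variables (V : finType) (arc : rel V).
Implicit Types (s : seq V) (u v w x y : V) (S N : {set V}).

Lemma index_cat_cons_ltn (s1 s2 : seq V) v x y : v \notin s1 -> x != v -> y != v ->
  (index x (s1 ++ v :: s2) < index y (s1 ++ v :: s2)) =
  (index x (s1 ++ s2) < index y (s1 ++ s2)).
Proof.
move=> vs1 xv yv; rewrite !index_cat /= eq_sym (negbTE xv) eq_sym (negbTE yv).
have ltx : x \in s1 -> index x s1 < size s1 by rewrite index_mem.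
have lty : y \in s1 -> index y s1 < size s1 by rewrite index_mem.
by case: (x \in s1) ltx; case: (y \in s1) lty => lty ltx //; apply/idP/idP; lia.
Qed.

Lemma dsig_cat_cons (s1 s2 : seq V) v u : v \notin s1 -> v \notin s2 -> u != v ->
  dsig arc (s1 ++ v :: s2) u =
  (backward arc (s1 ++ v :: s2) u v || backward arc (s1 ++ v :: s2) v u)
  + dsig arc (s1 ++ s2) u.
Proof.
move=> vs1 vs2 uv; rewrite /dsig !count_cat /= addnCA.
have same_backward s w : v \notin s -> w \in s ->
    backward arc (s1 ++ v :: s2) u w || backward arc (s1 ++ v :: s2) w u =
    backward arc (s1 ++ s2) u w || backward arc (s1 ++ s2) w u.
  move=> vs ws; have wv : w != v by apply: contraNneq vs => <-.
  by rewrite /backward !index_cat_cons_ltn.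
by congr (_ + (_ + _)); apply: eq_in_count => w; apply: same_backward.
Qed.

Lemma dsig_rem s v u : uniq s -> u != v -> dsig arc (rem v s) u <= dsig arc s u.
Proof.
move=> us uv; have [vs|/rem_id-> //] := boolP (v \in s).
move: us; case/splitPr: vs => s1 s2; rewrite cat_uniq /= => /and3P[_ /norP[vs1 _]].
case/andP=> vs2 _.
have -> : rem v (s1 ++ v :: s2) = s1 ++ s2.
  elim: s1 vs1 => [|x s1 IH] /=; first by rewrite eqxx.
  by rewrite inE negb_or eq_sym => /andP[/negbTE-> /IH->].
by rewrite dsig_cat_cons // leq_addl.
Qed.

Lemma backward_head s v x : backward arc (v :: s) v x = false.
Proof. by rewrite /backward /= eqxx ltn0 andbF. Qed.

Lemma dsig_cons_source s v u : (forall w, ~~ arc w v) -> v \notin s ->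
  dsig arc (v :: s) u = if u == v then 0 else dsig arc s u.
Proof.
move=> src vs; have no_arc_in x t : backward arc t x v = false.
  by rewrite /backward (negbTE (src x)).
case: eqVneq => [->|uv].
  apply/eqP; rewrite eqn0Ngt -has_count; apply/hasPn => w _.
  by rewrite no_arc_in backward_head.
by rewrite -[v :: s]cat0s dsig_cat_cons //= no_arc_in backward_head.
Qed.

Lemma indeg_eq0P v : reflect (forall u, ~~ arc u v) (indeg arc v == 0).
Proof.
rewrite /indeg cards_eq0; apply: (iffP eqP) => [/setP src u | src].
  by have := src u; rewrite !inE => ->.
by apply/setP => u; rewrite !inE (negbTE (src u)).
Qed.

Lemma sparse_setD1 S N v : sparse arc S N -> sparse arc (S :\ v) (N :\ v).
Proof.
case=> s [[us memS] [dle1 deq0]]; exists (rem v s); split; [split|split=> u].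
- exact: rem_uniq.
- by move=> x; rewrite mem_rem_uniq // !inE memS.
- rewrite !inE => /andP[uv uS]; exact: leq_trans (dsig_rem us uv) (dle1 u uS).
- rewrite !inE => /andP[uv uS] /andP[_ uN].
  by apply/eqP; rewrite -leqn0 -(deq0 u uS uN) dsig_rem.
Qed.

Lemma sparse_setU1_source S N v : (forall u, ~~ arc u v) -> v \notin S ->
  sparse arc S (N :\ v) -> sparse arc (v |: S) N.
Proof.
move=> src vS [s [[us memS] [dle1 deq0]]].
have vs : v \notin s by rewrite memS.
exists (v :: s); split; [split=> [|x]|split=> u].
- by rewrite /= vs.
- by rewrite in_cons memS !inE.
- rewrite dsig_cons_source // !inE; case: eqVneq => //= _; exact: dle1.
- rewrite dsig_cons_source // !inE; case: eqVneq => //= uv uS uN.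
  by apply: deq0; rewrite // !inE uv.
Qed.

End Ordering.

Theorem mainTheorem14 (V : finType) (arc : rel V) (v : V) (M : {set V}) :
  is_tournament arc -> indeg arc v = 0 ->
  sparse arc [set: V] M <-> sparse arc ([set: V] :\ v) (M :\ v).
Proof.
move=> _ /eqP/indeg_eq0P src; split; first exact: sparse_setD1.
have vD1 : v \notin [set: V] :\ v by rewrite !inE eqxx.
by move=> /(sparse_setU1_source src vD1); rewrite setD1K.
Qed.
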